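(* Let $\Gamma\in(0,1]$, $d_0\in(0,1)$, $r=1-\Gamma+\Gamma d_0$, and let $(b(t),d(t))$ be the solution of $\dot b=d$, $\dot d=\frac{\Gamma d}{1-\Gamma b}(1-b-d)-d$ with $b(0)=0$, $d(0)=d_0$; set $a(t)=b(t)+d(t)$. Then $a$ is strictly increasing on $[0,\infty)$ with $a(0)=d_0$ and $\lim_{t\to\infty}a(t)=d_0/r$; in particular no $t$ satisfies $a(t)\ge\beta$ when $\beta\ge d_0/r$. For every $\beta\in[d_0,d_0/r)$ and $t\ge0$, one has $a(t)\ge\beta$ if and only if $t\ge T(\beta,d_0,\Gamma)$, where $$T(\beta,d_0,\Gamma)=\frac1r\ln\left(\frac{1-r}{1-\frac{\beta}{d_0}r}\right).$$ *)

From Stdlib Require Import Reals Lra.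
Open Scope R_scope.

(* (b, d) solves  b' = d,  d' = Gamma d (1 - b - d) / (1 - Gamma b) - d
   on [0, +oo), with b(0) = 0, d(0) = d0.  The right-hand side is required
   to be well defined (1 - Gamma b(t) <> 0) along the solution. *)
Definition is_solution (Gamma d0 : R) (b d : R -> R) : Prop :=
  b 0 = 0 /\ d 0 = d0 /\
  (forall t, 0 <= t ->
     1 - Gamma * b t <> 0 /\
     derivable_pt_lim b t (d t) /\
     derivable_pt_lim d t
       (Gamma * d t / (1 - Gamma * b t) * (1 - b t - d t) - d t)).

Definition rr (Gamma d0 : R) : R := 1 - Gamma + Gamma * d0.

Definition Tbeta (beta d0 Gamma : R) : R :=
  let r := rr Gamma d0 in
  / r * ln ((1 - r) / (1 - beta / d0 * r)).

From Stdlib Require Import Reals Lra.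
Open Scope R_scope.

(* Along the solution the ratio (1 - b - d) / (1 - Gamma b) has
   zero derivative, so it stays equal to its initial value 1 - d0.  Solving
   this conservation law for d gives d = d0 - r b with r = rr Gamma d0, so b
   satisfies the linear equation b' = d0 - r b, b(0) = 0, whence
   b(t) = (d0/r) (1 - e^{-rt}).  Consequently a = b + d = d0 + (1 - r) b is
   the explicit profile (d0/r) (1 - (1 - r) e^{-rt}). *)

Lemma const_of_zero_derivative (f : R -> R) :
  (forall t, 0 <= t -> derivable_pt_lim f t 0) ->
  forall t, 0 <= t -> f t = f 0.
Proof.
  intros Hf t Ht. destruct (Req_dec t 0) as [->|Hne]; [reflexivity|].
  destruct (MVT_cor2 f (fun _ => 0) 0 t) as [c [Hc _]]; [lra| |lra].
  intros c Hc; apply Hf; lra.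
Qed.

Lemma derivable_pt_lim_eq f x l l' :
  derivable_pt_lim f x l -> l = l' -> derivable_pt_lim f x l'.
Proof. now intros H <-. Qed.

(* The solution of y' = k - r y, y(0) = 0, on [0, +oo) is (k/r)(1 - e^{-rt}):
   the product (y - k/r) e^{rt} has zero derivative. *)
Lemma linear_ode_closed_form (y : R -> R) (k r : R) :
  r <> 0 -> y 0 = 0 ->
  (forall t, 0 <= t -> derivable_pt_lim y t (k - r * y t)) ->
  forall t, 0 <= t -> y t = k / r * (1 - exp (- (r * t))).
Proof.
  intros Hr Hy0 Hy.
  set (Y := fun t => (y t - k / r) * exp (r * t)).
  assert (HY : forall t, 0 <= t -> derivable_pt_lim Y t 0).
  { intros t Ht.
    assert (Hexp : derivable_pt_lim (comp exp (mult_real_fct r id)) t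
                     (exp (r * t) * (r * 1))).
    { apply derivable_pt_lim_comp.
      - apply derivable_pt_lim_scal, derivable_pt_lim_id.
      - apply derivable_pt_lim_exp. }
    assert (Hshift : derivable_pt_lim (y - fct_cte (k / r))%F t
                       (k - r * y t - 0)).
    { apply derivable_pt_lim_minus; [now apply Hy|apply derivable_pt_lim_const]. }
    pose proof (derivable_pt_lim_mult _ _ _ _ _ Hshift Hexp) as HYt.
    unfold mult_fct, minus_fct, fct_cte, comp, mult_real_fct, id in HYt.
    eapply derivable_pt_lim_eq; [exact HYt|]. field; exact Hr. }
  intros t Ht.
  pose proof (const_of_zero_derivative Y HY t Ht) as HYc.
  unfold Y in HYc. rewrite Hy0, Rmult_0_r, exp_0 in HYc.
  pose proof (exp_pos (r * t)) as Hpos.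
  rewrite exp_Ropp.
  apply (Rmult_eq_reg_r (exp (r * t))); [|lra].
  replace (y t * exp (r * t))
    with ((y t - k / r) * exp (r * t) + k / r * exp (r * t)) by ring.
  rewrite HYc. field. split; lra.
Qed.

Lemma Rmult_le_iff_l k x y : 0 < k -> (k * x <= k * y <-> x <= y).
Proof.
  intro Hk; split; intro H.
  - exact (Rmult_le_reg_l k x y Hk H).
  - apply Rmult_le_compat_l; lra.
Qed.

Lemma exp_le_iff x y : exp x <= exp y <-> x <= y.
Proof.
  split; intro H.
  - destruct (Rle_lt_dec x y) as [|Hlt]; [assumption|].
    apply exp_increasing in Hlt; lra.
  - destruct (Req_dec x y) as [->|]; [lra|]. left; apply exp_increasing; lra.
Qed.

Lemma ln_le_iff_le_exp x y : 0 < x -> (ln x <= y <-> x <= exp y).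
Proof. intro Hx. rewrite <- (exp_le_iff (ln x) y), exp_ln by exact Hx. tauto. Qed.

Lemma exp_decay_small (r eps : R) :
  0 < r -> 0 < eps ->
  exists M, forall t, M <= t -> exp (- (r * t)) < eps.
Proof.
  intros Hr Heps. exists ((1 - ln eps) / r). intros t Ht.
  assert (Hrt : 1 - ln eps <= r * t).
  { apply (Rmult_le_compat_l r) in Ht; [|lra].
    replace (r * ((1 - ln eps) / r)) with (1 - ln eps) in Ht by (field; lra).
    exact Ht. }
  rewrite <- (exp_ln eps) by exact Heps. apply exp_increasing. lra.
Qed.

Definition profile (d0 r t : R) : R := d0 / r * (1 - (1 - r) * exp (- (r * t))).

Section Profile.
Variables d0 r : R.
Hypothesis Hd0 : 0 < d0.
Hypothesis Hr : 0 < r < 1.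

Lemma gap_coefficient_pos : 0 < d0 / r * (1 - r).
Proof. apply Rmult_lt_0_compat; [apply Rdiv_lt_0_compat|]; lra. Qed.

Lemma profile_gap t :
  d0 / r - profile d0 r t = d0 / r * (1 - r) * exp (- (r * t)).
Proof. unfold profile; ring. Qed.

Lemma profile_gap_pos t : 0 < d0 / r * (1 - r) * exp (- (r * t)).
Proof.
  apply Rmult_lt_0_compat; [exact gap_coefficient_pos|apply exp_pos].
Qed.

(* The gap decreases strictly, so the profile increases strictly. *)
Lemma profile_increasing s t : s < t -> profile d0 r s < profile d0 r t.
Proof.
  intro Hst.
  assert (exp (- (r * t)) < exp (- (r * s))) by (apply exp_increasing; nra).
  pose proof (profile_gap s). pose proof (profile_gap t).
  pose proof gap_coefficient_pos. nra.
Qed.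

Lemma profile_lt_limit t : profile d0 r t < d0 / r.
Proof. pose proof (profile_gap t); pose proof (profile_gap_pos t); lra. Qed.

Lemma profile_converges eps :
  0 < eps -> exists M, forall t, M <= t -> Rabs (profile d0 r t - d0 / r) < eps.
Proof.
  intro Heps.
  set (c := d0 / r * (1 - r)).
  assert (Hc : 0 < c) by exact gap_coefficient_pos.
  destruct (exp_decay_small r (eps / c)) as [M HM]; [lra|now apply Rdiv_lt_0_compat|].
  exists M; intros t Ht.
  rewrite Rabs_minus_sym, profile_gap, Rabs_right by (left; apply profile_gap_pos).
  specialize (HM t Ht). fold c.
  apply (Rmult_lt_compat_l c) in HM; [|exact Hc].
  replace (c * (eps / c)) with eps in HM by (field; lra). exact HM.
Qed.

(* Crossing time of a level beta below the limit d0/r: solving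
   beta <= profile for t through (1 - r) e^{-rt} <= 1 - beta r / d0. *)
Lemma profile_threshold beta t :
  beta < d0 / r ->
  (beta <= profile d0 r t <-> / r * ln ((1 - r) / (1 - beta / d0 * r)) <= t).
Proof.
  intro Hbeta.
  set (c := 1 - beta / d0 * r).
  assert (Hc : 0 < c).
  { assert (beta * r < d0).
    { apply (Rmult_lt_compat_r r) in Hbeta; [|lra].
      replace (d0 / r * r) with d0 in Hbeta by (field; lra). lra. }
    unfold c. assert (beta / d0 * r < 1); [|lra].
    replace (beta / d0 * r) with (beta * r * / d0) by (field; lra).
    rewrite <- (Rinv_r d0) by lra.
    apply Rmult_lt_compat_r; [apply Rinv_0_lt_compat|]; lra. }
  pose proof (exp_pos (r * t)) as He.
  transitivity ((1 - r) * exp (- (r * t)) <= c).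
  { rewrite <- (Rmult_le_iff_l (r / d0) beta (profile d0 r t))
      by (apply Rdiv_lt_0_compat; lra).
    unfold profile, c.
    replace (r / d0 * (d0 / r * (1 - (1 - r) * exp (- (r * t)))))
      with (1 - (1 - r) * exp (- (r * t))) by (field; lra).
    replace (r / d0 * beta) with (beta / d0 * r) by (field; lra).
    split; intro; lra. }
  transitivity ((1 - r) / c <= exp (r * t)).
  { rewrite <- (Rmult_le_iff_l (exp (r * t) / c) ((1 - r) * exp (- (r * t))) c)
      by (apply Rdiv_lt_0_compat; lra).
    rewrite exp_Ropp.
    replace (exp (r * t) / c * ((1 - r) * / exp (r * t))) with ((1 - r) / c)
      by (field; lra).
    replace (exp (r * t) / c * c) with (exp (r * t)) by (field; lra).
    reflexivity. }
  rewrite <- ln_le_iff_le_exp by (apply Rdiv_lt_0_compat; lra).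
  rewrite <- (Rmult_le_iff_l (/ r) (ln ((1 - r) / c)) (r * t))
    by (apply Rinv_0_lt_compat; lra).
  replace (/ r * (r * t)) with t by (field; lra).
  reflexivity.
Qed.

End Profile.

Section Solution.
Variables Gamma d0 : R.
Variables b d : R -> R.
Hypothesis Hsol : is_solution Gamma d0 b d.

(* Conservation law: (1 - b - d) / (1 - Gamma b) is constant, equal to 1 - d0. *)
Lemma solution_conservation t :
  0 <= t -> 1 - (b t + d t) = (1 - d0) * (1 - Gamma * b t).
Proof.
  destruct Hsol as [Hb0 [Hd0 Hode]].
  set (Q := fun t => (1 - (b t + d t)) / (1 - Gamma * b t)).
  assert (HQ : forall t, 0 <= t -> derivable_pt_lim Q t 0).
  { intros s Hs. destruct (Hode s Hs) as [Hden [Hb' Hd']].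
    assert (Hnum : derivable_pt_lim (fct_cte 1 - (b + d))%F s
      (0 - (d s + (Gamma * d s / (1 - Gamma * b s) * (1 - b s - d s) - d s)))).
    { apply derivable_pt_lim_minus; [apply derivable_pt_lim_const|].
      apply derivable_pt_lim_plus; assumption. }
    assert (Hdenom : derivable_pt_lim (fct_cte 1 - mult_real_fct Gamma b)%F s
                       (0 - Gamma * d s)).
    { apply derivable_pt_lim_minus; [apply derivable_pt_lim_const|].
      apply derivable_pt_lim_scal; assumption. }
    pose proof (derivable_pt_lim_div _ _ _ _ _ Hnum Hdenom Hden) as HQs.
    unfold minus_fct, plus_fct, fct_cte, mult_real_fct in HQs.
    eapply derivable_pt_lim_eq; [exact HQs|]. unfold Rsqr; field; exact Hden. }
  intro Ht. destruct (Hode t Ht) as [Hden _].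
  pose proof (const_of_zero_derivative Q HQ t Ht) as HQc.
  unfold Q in HQc. rewrite Hb0, Hd0, Rmult_0_r, Rminus_0_r, Rdiv_1_r in HQc.
  apply (Rmult_eq_reg_r (/ (1 - Gamma * b t))); [|now apply Rinv_neq_0_compat].
  unfold Rdiv in HQc; rewrite HQc. field; exact Hden.
Qed.

Lemma solution_d_linear t : 0 <= t -> d t = d0 - rr Gamma d0 * b t.
Proof. intro Ht. pose proof (solution_conservation t Ht). unfold rr. nra. Qed.

Lemma solution_b_closed_form t :
  rr Gamma d0 <> 0 -> 0 <= t ->
  b t = d0 / rr Gamma d0 * (1 - exp (- (rr Gamma d0 * t))).
Proof.
  intros Hr. destruct Hsol as [Hb0 [_ Hode]].
  apply linear_ode_closed_form; [exact Hr|exact Hb0|].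
  intros s Hs. rewrite <- solution_d_linear by exact Hs. apply (Hode s Hs).
Qed.

(* a = b + d = d0 + (1 - r) b is the explicit profile. *)
Lemma solution_a_profile t :
  rr Gamma d0 <> 0 -> 0 <= t -> b t + d t = profile d0 (rr Gamma d0) t.
Proof.
  intros Hr Ht. rewrite (solution_d_linear t Ht), (solution_b_closed_form t Hr Ht).
  unfold profile. field. exact Hr.
Qed.

End Solution.

Theorem theorem5 (Gamma d0 : R) (b d : R -> R) :
  0 < Gamma <= 1 -> 0 < d0 < 1 ->
  is_solution Gamma d0 b d ->
  let a := fun t => b t + d t in
  let r := rr Gamma d0 in
  (forall s t, 0 <= s -> s < t -> a s < a t) /\
  a 0 = d0 /\
  (forall eps, 0 < eps -> exists M, forall t, M <= t -> Rabs (a t - d0 / r) < eps) /\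
  (forall beta, d0 / r <= beta -> forall t, 0 <= t -> ~ (beta <= a t)) /\
  (forall beta, d0 <= beta < d0 / r -> forall t, 0 <= t ->
     (beta <= a t <-> Tbeta beta d0 Gamma <= t)).
Proof.
  intros HG Hd Hsol a r.
  assert (Hr : 0 < r < 1) by (unfold r, rr; nra).
  assert (Ha : forall t, 0 <= t -> a t = profile d0 r t)
    by (intros t Ht; apply solution_a_profile; [exact Hsol|fold r; lra|exact Ht]).
  split; [|split; [|split; [|split]]].
  - intros s t Hs Hst. rewrite !Ha by lra. now apply profile_increasing.
  - destruct Hsol as [Hb0 [Hd0 _]]. unfold a. rewrite Hb0, Hd0. ring.
  - intros eps Heps.
    destruct (profile_converges d0 r (proj1 Hd) Hr eps Heps) as [M HM].
    exists (Rmax 0 M). intros t Ht.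
    rewrite Ha by (eapply Rle_trans; [apply Rmax_l|exact Ht]).
    apply HM. eapply Rle_trans; [apply Rmax_r|exact Ht].
  - intros beta Hbeta t Ht Hle. rewrite Ha in Hle by exact Ht.
    pose proof (profile_lt_limit d0 r (proj1 Hd) Hr t). lra.
  - intros beta [_ Hbeta] t Ht. rewrite Ha by exact Ht.
    exact (profile_threshold d0 r (proj1 Hd) Hr beta t Hbeta).
Qed.
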